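(* Let $s$ be a Sturmian word having a factorization $s=U_1U_2\cdots U_n\cdots$ where each $U_i$ ($i\ge1$) is a non-empty prefix of $s$. Then there exist integers $i,j\ge1$ with $r_s(U_i)\neq r_s(U_j)$.
   Context: A Sturmian word is an infinite word $s\in\{a,b\}^{\omega}$ that is aperiodic (not ultimately periodic) and balanced: for all factors $u,v$ of $s$ with $|u|=|v|$ one has $||u|_x-|v|_x|\le 1$ for $x\in\{a,b\}$, where $|u|_x$ is the number of occurrences of $x$ in $u$. A non-empty factor $w$ of $s$ is rich in the letter $z\in\{a,b\}$ if there is a factor $v$ of $s$ with $|v|=|w|$ and $|w|_z>|v|_z$; every non-empty factor of a Sturmian word is rich in exactly one letter, and $r_s(w)\in\{a,b\}$ denotes that letter. *)

From HB Require Import structures.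
From mathcomp Require Import all_boot.
Set Implicit Arguments. Unset Strict Implicit. Unset Printing Implicit Defensive.

Inductive letter := la | lb.
Definition letter_eqb (x y : letter) : bool :=
  match x, y with la, la | lb, lb => true | _, _ => false end.
Lemma letter_eqP : Equality.axiom letter_eqb.
Proof. by case; case; constructor. Qed.
HB.instance Definition _ := hasDecEq.Build letter letter_eqP.

Definition iword := nat -> letter.

Definition factor_at (s : iword) (i n : nat) : seq letter :=
  mkseq (fun k => s (i + k)) n.

Definition is_factor (s : iword) (w : seq letter) : Prop :=
  exists i, w = factor_at s i (size w).

Definition is_prefix (s : iword) (w : seq letter) : Prop :=
  w = factor_at s 0 (size w).

Definition occ (x : letter) (u : seq letter) : nat := count (pred1 x) u.

Definition ultimately_periodic (s : iword) : Prop :=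
  exists p N, 0 < p /\ forall n, N <= n -> s (n + p) = s n.

Definition balanced (s : iword) : Prop :=
  forall u v, is_factor s u -> is_factor s v -> size u = size v ->
  forall x : letter, occ x u <= occ x v + 1 /\ occ x v <= occ x u + 1.

Definition sturmian (s : iword) : Prop :=
  ~ ultimately_periodic s /\ balanced s.

Definition rich_in (s : iword) (w : seq letter) (z : letter) : Prop :=
  w <> [::] /\ is_factor s w /\
  exists v, is_factor s v /\ size v = size w /\ occ z v < occ z w.

(* s = U_0 U_1 U_2 ... (infinite concatenation) *)
Definition start_pos (U : nat -> seq letter) (k : nat) : nat :=
  \sum_(i < k) size (U i).

Definition factorizes (s : iword) (U : nat -> seq letter) : Prop :=
  (forall k, U k <> [::]) /\
  forall k m, m < size (U k) -> s (start_pos U k + m) = nth la (U k) m.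

(* Fix a letter z.  For a balanced word, cmax n is the largest number of z's
   in a factor of length n; every factor of length n contains cmax n or
   cmax n - 1 of them.  Balance makes cmax almost additive, and a completeness
   argument yields a slope a with cmax n - 1 <= n a <= cmax n.  The drift
   d n = |s[0,n)|_z - n a of the prefixes then stays in [-1,1].
   (1) If the prefix of length n is rich in z, then d n > 0: otherwise every
       window of length n would lower the drift, and the infinitely many
       deficient windows forced by aperiodicity would push the averaged drift
       to -oo.
   (2) If s = U_0 U_1 ... with every U_k a prefix, the drift is additive along
       the factorization, so if all U_k were rich in z the drift would be
       unbounded (additive_drift_unbounded), contradicting d <= 1.
   Since every non-empty prefix of an aperiodic word is rich in some letter
   (prefix_rich), some U_k must be rich in a letter other than that of U_0. *)

From Stdlib Require Import Reals Lra ClassicalEpsilon Classical.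
From mathcomp Require Import all_boot zify.

Set Implicit Arguments.
Unset Strict Implicit.

Definition cnt (s : iword) (z : letter) (i n : nat) : nat :=
  occ z (factor_at s i n).

Lemma size_factor_at s i n : size (factor_at s i n) = n.
Proof. by rewrite size_mkseq. Qed.

Lemma factor_atD s i m n :
  factor_at s i (m + n) = factor_at s i m ++ factor_at s (i + m) n.
Proof.
rewrite /factor_at /mkseq iotaD map_cat; congr (_ ++ _).
rewrite add0n -[in iota m n](addn0 m) iotaDl -map_comp.
by apply: eq_map => k /=; rewrite addnA.
Qed.

Lemma factor_at_take s i m n :
  m <= n -> factor_at s i m = take m (factor_at s i n).
Proof.
by move=> le_mn; rewrite -(subnKC le_mn) factor_atD take_size_cat ?size_factor_at.
Qed.

Lemma cntD s z i m n : cnt s z i (m + n) = cnt s z i m + cnt s z (i + m) n.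
Proof. by rewrite /cnt factor_atD /occ count_cat. Qed.

Lemma cnt1 s z m : cnt s z m 1 = (s m == z).
Proof. by rewrite /cnt /occ /factor_at /= addn0 addn0. Qed.

Lemma cnt_la_lb s i n : cnt s la i n + cnt s lb i n = n.
Proof.
rewrite /cnt /occ -[RHS](size_factor_at s i n) -(count_predC (pred1 la)).
by congr (_ + _); apply: eq_count; case.
Qed.

Lemma cnt_slide s z m n : s (m + n) <> s m -> cnt s z (m + 1) n <> cnt s z m n.
Proof.
move=> neq_letters.
have := cntD s z m 1 n; have := cntD s z m n 1; rewrite addnC => ->.
rewrite !cnt1; move: neq_letters.
by case: (s m); case: (s (m + n)); case: z => //= _; lia.
Qed.

Lemma aperiodic_mismatch s n : ~ ultimately_periodic s -> 0 < n ->
  forall N, exists2 m, N <= m & s (m + n) <> s m.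
Proof.
move=> aper n_gt0 N; apply: NNPP => no_mismatch; apply: aper.
exists n, N; split=> // m le_Nm; apply: NNPP => neq.
by apply: no_mismatch; exists m.
Qed.

Lemma rich_prefixP s z n :
  rich_in s (factor_at s 0 n) z <-> 0 < n /\ exists i, cnt s z i n < cnt s z 0 n.
Proof.
split.
  move=> [ne [_ [v [[i def_v] [size_v lt_v]]]]]; split.
    by rewrite lt0n; apply/eqP => n0; apply: ne; rewrite n0.
  by exists i; move: lt_v; rewrite def_v size_v size_factor_at.
move=> [n_gt0 [i lt_i]]; split.
  by move/(congr1 size); rewrite size_factor_at /=; lia.
split; first by exists 0; rewrite size_factor_at.
exists (factor_at s i n); rewrite !size_factor_at.
by split; first by exists i; rewrite size_factor_at.
Qed.

(* Every non-empty prefix of an aperiodic word is rich in some letter: two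
   consecutive windows have different la-counts, so if neither has fewer la's
   than the prefix, one of them has more la's, hence fewer lb's. *)
Lemma prefix_rich s n : ~ ultimately_periodic s -> 0 < n ->
  exists z, rich_in s (factor_at s 0 n) z.
Proof.
move=> aper n_gt0.
have [m _ mismatch] := aperiodic_mismatch aper n_gt0 0.
have slide := cnt_slide (z := la) mismatch.
case: (boolP [exists i : 'I_2, cnt s la (m + i) n < cnt s la 0 n]).
  by move=> /existsP[i lt_i]; exists la; apply/rich_prefixP; split => //; exists (m + i).
rewrite negb_exists => /forallP no_la.
have := no_la ord0; have := no_la (Ordinal (isT : 1 < 2)); rewrite /= addn0.
rewrite -!leqNgt => ge1 ge0; exists lb; apply/rich_prefixP; split => //.
have := cnt_la_lb s 0 n; have := cnt_la_lb s m n; have := cnt_la_lb s (m + 1) n.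
by case: (ltngtP (cnt s la (m + 1) n) (cnt s la m n)) slide => // ? _;
  [exists m | exists (m + 1)]; lia.
Qed.

(* Largest number of z's in a factor of length n of a balanced word.  By
   balance all such counts lie within one of the prefix count, so the maximum
   is the prefix count or its successor. *)
Definition cmax (s : iword) (z : letter) (n : nat) : nat :=
  if excluded_middle_informative (exists i, cnt s z 0 n < cnt s z i n)
  then (cnt s z 0 n).+1 else cnt s z 0 n.

Section Balanced.
Variables (s : iword) (z : letter).
Hypothesis bal : balanced s.

Lemma cnt_balanced i j n : cnt s z i n <= cnt s z j n + 1.
Proof.
have factor_at_factor k : is_factor s (factor_at s k n).
  by exists k; rewrite size_factor_at.
have same_size : size (factor_at s i n) = size (factor_at s j n).
  by rewrite !size_factor_at.
by case: (bal (factor_at_factor i) (factor_at_factor j) same_size z).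
Qed.

Lemma cmax_ge i n : cnt s z i n <= cmax s z n.
Proof.
rewrite /cmax; case: excluded_middle_informative => [larger|no_larger] /=.
  by have := cnt_balanced i 0 n; lia.
by rewrite leqNgt; apply/negP => lt_i; apply: no_larger; exists i.
Qed.

Lemma cmax_attained n : exists i, cnt s z i n = cmax s z n.
Proof.
rewrite /cmax; case: excluded_middle_informative => [[j lt_j]|_] /=; last by exists 0.
by exists j; have := cnt_balanced j 0 n; lia.
Qed.

Lemma cmax_le i n : cmax s z n <= cnt s z i n + 1.
Proof. by have [j <-] := cmax_attained n; apply: cnt_balanced. Qed.

Lemma cmax0 : cmax s z 0 = 0.
Proof. by have [i <-] := cmax_attained 0. Qed.

(* A window of length m * k is cut into m windows of length k. *)
Lemma cnt_mul_bounds m k i :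
  cnt s z i (m * k) <= m * cmax s z k <= cnt s z i (m * k) + m.
Proof.
elim: m i => [|m IH] i; first by rewrite !mul0n.
rewrite !mulSn cntD; have := IH (i + k).
have := cmax_ge i k; have := cmax_le i k; lia.
Qed.

(* The near-additivity of cmax, in the form used to bound the slope. *)
Lemma cmax_cross n k : n * cmax s z k <= k * cmax s z n + n.
Proof.
have := cnt_mul_bounds n k 0; have := cnt_mul_bounds k n 0.
by rewrite mulnC; lia.
Qed.

Lemma rich_prefix_max n :
  (exists i, cnt s z i n < cnt s z 0 n) -> cnt s z 0 n = cmax s z n.
Proof.
by move=> [i lt_i]; have := cmax_le i n; have := cmax_ge 0 n; lia.
Qed.

(* An aperiodic balanced word has deficient windows of length n arbitrarily
   far: two consecutive windows with different counts cannot both be maximal. *)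
Lemma deficient_windows n : ~ ultimately_periodic s -> 0 < n ->
  forall N, exists2 M, N <= M & cnt s z M n < cmax s z n.
Proof.
move=> aper n_gt0 N; have [m le_Nm mismatch] := aperiodic_mismatch aper n_gt0 N.
have slide := cnt_slide (z := z) mismatch.
have := cmax_ge m n; have := cmax_ge (m + 1) n.
case: (ltnP (cnt s z m n) (cmax s z n)) => [lt_m|ge_m]; first by exists m.
by exists (m + 1); lia.
Qed.

End Balanced.

Open Scope R_scope.

Lemma Rdiv_le_mult a b c : 0 < c -> a / c <= b <-> a <= b * c.
Proof.
move=> c_gt0; have cancel_c : a / c * c = a by field; lra.
split=> H; last by apply: (Rmult_le_reg_r c) => //; rewrite cancel_c.
by rewrite -cancel_c; apply: Rmult_le_compat_r => //; lra.
Qed.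

Lemma INR_pos (n : nat) : (0 < n)%N -> 0 < INR n.
Proof. by move/ltP; apply: lt_0_INR. Qed.

Lemma INR_le (m n : nat) : (m <= n)%N -> INR m <= INR n.
Proof. by move/leP; apply: le_INR. Qed.

(* a is a slope of s for the letter z: the frequency of z, in the sense that
   n a lies between the two possible counts of z in windows of length n. *)
Definition is_slope (s : iword) (z : letter) (a : R) : Prop :=
  forall n, INR (cmax s z n) - 1 <= INR n * a <= INR (cmax s z n).

(* The slope is the supremum of the ratios (cmax k - 1) / k. *)
Lemma slope_exists s z : balanced s -> exists a, is_slope s z a.
Proof.
move=> bal.
pose ratios x := exists2 k, (0 < k)%N & x = (INR (cmax s z k) - 1) / INR k.
have ratio_le n x : (0 < n)%N -> ratios x -> x <= INR (cmax s z n) / INR n.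
  move=> n_gt0 [k k_gt0 ->]; have := INR_le (cmax_cross z bal n k).
  rewrite plus_INR !mult_INR; have := INR_pos n_gt0; have := INR_pos k_gt0.
  set cn := INR (cmax s z n); set ck := INR (cmax s z k).
  move=> k_pos n_pos cross; apply: (Rmult_le_reg_r (INR n * INR k)); first nra.
  replace ((ck - 1) / INR k * (INR n * INR k)) with ((ck - 1) * INR n) by (field; lra).
  replace (cn / INR n * (INR n * INR k)) with (cn * INR k) by (field; lra).
  lra.
have [a [a_ub a_lub]] : {a | is_lub ratios a}.
  apply: completeness; first by exists (INR (cmax s z 1) / INR 1) => x; apply: ratio_le.
  by exists ((INR (cmax s z 1) - 1) / INR 1), 1%N.
exists a => n; case: (posnP n) => [->|n_gt0].
  by rewrite cmax0 //=; lra.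
have n_pos := INR_pos n_gt0; split.
  by rewrite Rmult_comm -Rdiv_le_mult //; apply: a_ub; exists n.
have : a <= INR (cmax s z n) / INR n by apply: a_lub => x; apply: ratio_le.
move=> /(Rmult_le_compat_r (INR n) _ _ (Rlt_le _ _ n_pos)).
by rewrite /Rdiv Rmult_assoc Rinv_l; lra.
Qed.

Definition drift (s : iword) (z : letter) (a : R) (n : nat) : R :=
  INR (cnt s z 0 n) - INR n * a.

Lemma drift_shift s z a N n :
  drift s z a (N + n) = drift s z a N + INR (cnt s z N n) - INR n * a.
Proof. by rewrite /drift cntD add0n !plus_INR; ring. Qed.

Lemma drift_bounded s z a n : balanced s -> is_slope s z a ->
  -1 <= drift s z a n <= 1.
Proof.
move=> bal slope; rewrite /drift.
have := INR_le (cmax_ge z bal 0 n); have := INR_le (cmax_le z bal 0 n).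
by rewrite plus_INR; have := slope n; simpl; lra.
Qed.

Fixpoint window_sum (f : nat -> R) (N n : nat) : R :=
  if n is k.+1 then window_sum f N k + f (N + k)%N else 0.

Lemma window_sum_slide f N n :
  window_sum f N.+1 n = window_sum f N n - f N + f (N + n)%N.
Proof.
elim: n => [|n IH] /=; first by rewrite addn0; ring.
by rewrite IH addSnnS; ring.
Qed.

Lemma window_sum_bounded f N n : (forall m, -1 <= f m <= 1) ->
  - INR n <= window_sum f N n <= INR n.
Proof.
move=> f_bounded; elim: n => [|n IH]; first by simpl; lra.
by rewrite S_INR /=; have := f_bounded (N + n)%N; lra.
Qed.

(* A bounded function cannot satisfy f (N + n) <= f N everywhere while
   dropping by at least one at arbitrarily large N: the averages over windows
   of length n are nonincreasing and would tend to -oo. *)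
Lemma no_bounded_descent (f : nat -> R) (n : nat) :
  (forall m, -1 <= f m <= 1) ->
  (forall N, f (N + n)%N <= f N) ->
  (forall N, exists2 M, (N <= M)%N & f (M + n)%N <= f M - 1) -> False.
Proof.
move=> f_bounded descent drops.
pose psi N := window_sum f N n.
have psi_step N : psi N.+1 <= psi N.
  by rewrite /psi window_sum_slide; have := descent N; lra.
have psi_drop M : f (M + n)%N <= f M - 1 -> psi M.+1 <= psi M - 1.
  by rewrite /psi window_sum_slide; lra.
have psi_bounded N : - INR n <= psi N <= INR n.
  exact: window_sum_bounded.
have psi_mono j N : psi (N + j)%N <= psi N.
  elim: j => [|j IH]; first by rewrite addn0; lra.
  by rewrite addnS; have := psi_step (N + j)%N; lra.
have psi_unbounded t : exists N, psi N <= psi 0%N - INR t.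
  elim: t => [|t [N psiN]]; first by exists 0%N; simpl; lra.
  have [M le_NM dropM] := drops N; exists M.+1.
  have := psi_drop M dropM; have := psi_mono (M - N)%N N.
  by rewrite subnKC // S_INR; lra.
have [N psiN] := psi_unbounded (n + n).+1%N.
have := psi_bounded N; have := psi_bounded 0%N.
by rewrite S_INR plus_INR in psiN; lra.
Qed.

Lemma drift_rich_pos s z a n : sturmian s -> is_slope s z a ->
  rich_in s (factor_at s 0 n) z -> 0 < drift s z a n.
Proof.
move=> [aper bal] slope /rich_prefixP[n_gt0 deficient].
apply: Rnot_le_lt => drift_le0.
have cmax_eq : INR (cmax s z n) = INR n * a.
  by move: drift_le0; rewrite /drift (rich_prefix_max bal deficient); have := slope n; lra.
apply: (@no_bounded_descent (drift s z a) n) => [m|N|N].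
- exact: drift_bounded.
- by rewrite drift_shift; have := INR_le (cmax_ge z bal N n); lra.
have [M le_NM lt_M] := deficient_windows z bal aper n_gt0 N.
by exists M; rewrite // drift_shift; have := INR_le lt_M; rewrite S_INR; lra.
Qed.

Fixpoint min_pos (f : nat -> R) (B : nat) : R :=
  if B is b.+1 then Rmin (min_pos f b) (if Rlt_dec 0 (f b.+1) then f b.+1 else 1)
  else 1.

Lemma min_pos_gt0 f B : 0 < min_pos f B.
Proof.
elim: B => [|b IH] /=; first lra.
by apply: Rmin_glb_lt => //; case: Rlt_dec => /=; lra.
Qed.

Lemma min_pos_le f B m : (0 < m <= B)%N -> 0 < f m -> min_pos f B <= f m.
Proof.
elim: B => [|b IH] /andP[m_gt0 le_mB] fm_pos; first lia.
rewrite /=; case: (ltngtP m b.+1) le_mB fm_pos => // [lt_mb|->] _ fm_pos.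
  by apply: Rle_trans (Rmin_l _ _) _; apply: IH; rewrite // m_gt0.
by apply: Rle_trans (Rmin_r _ _) _; case: Rlt_dec => /=; lra.
Qed.

Section AdditiveDrift.
Variables (d : nat -> R) (len : nat -> nat).
Let pos k := (\sum_(i < k) len i)%N.
Hypothesis d0 : d 0%N = 0.
Hypothesis len_gt0 : forall k, (0 < len k)%N.
Hypothesis d_len_pos : forall k, 0 < d (len k).
Hypothesis d_additive :
  forall k m, (m <= len k)%N -> d (pos k + m)%N = d (pos k) + d m.

Lemma d_pos_step k : d (pos k.+1) = d (pos k) + d (len k).
Proof. by rewrite /pos big_ord_recr d_additive. Qed.

Lemma unbounded_of_growth delta : 0 < delta ->
  (forall t, exists m, INR t * delta <= d m) -> forall b, exists m, b < d m.
Proof.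
move=> delta_pos growth b; have [t large_t] := INR_archimed delta b delta_pos.
by have [m le_m] := growth t; exists m; lra.
Qed.

Lemma growth_bounded_blocks B : (forall k, (len k <= B)%N) ->
  forall t, INR t * min_pos d B <= d (pos t).
Proof.
move=> len_le; elim=> [|t IH]; first by rewrite /pos big_ord0 d0 /=; lra.
have len_t : (0 < len t <= B)%N by rewrite len_gt0 len_le.
by rewrite d_pos_step S_INR; have := min_pos_le len_t (d_len_pos t); lra.
Qed.

(* With arbitrarily long blocks, any value d m reappears shifted by at least
   d (len 0) at the start of a block longer than m. *)
Lemma growth_long_blocks : (forall B, exists k, (B < len k)%N) ->
  forall t, exists m, INR t * d (len 0%N) <= d m.
Proof.
move=> long; have d_pos_ge k : d (len 0%N) <= d (pos k.+1).
  elim: k => [|k IH]; first by rewrite d_pos_step /pos big_ord0 d0; lra.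
  by rewrite d_pos_step; have := d_len_pos k.+1; lra.
elim=> [|t [m le_m]]; first by exists 0%N; rewrite d0 /=; lra.
have [[|k] lt_k] := long (maxn m (len 0%N)); first by rewrite ltnNge leq_maxr in lt_k.
exists (pos k.+1 + m)%N; rewrite d_additive; last by move: lt_k; rewrite gtn_max; lia.
by rewrite S_INR; have := d_pos_ge k; lra.
Qed.

(* Either the block lengths are bounded or blocks are arbitrarily long. *)
Lemma additive_drift_unbounded b : exists m, b < d m.
Proof.
case: (classic (exists B, forall k, (len k <= B)%N)) => [[B len_le]|unbounded_len].
  apply: (unbounded_of_growth (min_pos_gt0 d B)) => t.
  by exists (pos t); apply: growth_bounded_blocks.
apply: (unbounded_of_growth (d_len_pos 0)); apply: growth_long_blocks => B.
apply: NNPP => no_long; apply: unbounded_len; exists B => k.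
by rewrite leqNgt; apply/negP => lt_k; apply: no_long; exists k.
Qed.

End AdditiveDrift.

Lemma factor_at_start s U k :
  factorizes s U -> factor_at s (start_pos U k) (size (U k)) = U k.
Proof.
move=> [_ fac]; apply: (@eq_from_nth _ la); first by rewrite size_factor_at.
by move=> m; rewrite size_factor_at => lt_m; rewrite nth_mkseq // fac.
Qed.

Lemma prefix_factorization_not_uniform s U z :
  sturmian s -> factorizes s U -> (forall k, is_prefix s (U k)) ->
  ~ (forall k, rich_in s (U k) z).
Proof.
move=> sturm fact prefix all_rich; have bal := sturm.2.
have [a slope] := slope_exists z bal.
have len_gt0 k : (0 < size (U k))%N.
  by rewrite lt0n size_eq0; apply/eqP; apply: fact.1.
have block_prefix k m : (m <= size (U k))%N ->
    cnt s z (start_pos U k) m = cnt s z 0 m.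
  move=> le_m; rewrite /cnt (factor_at_take _ _ le_m) factor_at_start //.
  by rewrite prefix -factor_at_take.
have [m drift_gt1] : exists m, 1 < drift s z a m.
  apply: (@additive_drift_unbounded (drift s z a) (fun k => size (U k))) => //.
  - by rewrite /drift /=; ring.
  - by move=> k; apply: drift_rich_pos => //; rewrite -prefix.
  - move=> k m le_m; rewrite drift_shift block_prefix //; rewrite /drift /=; ring.
by have := drift_bounded m bal slope; lra.
Qed.

Theorem mainTheorem7 (s : iword) (U : nat -> seq letter) :
  sturmian s ->
  factorizes s U ->
  (forall k, is_prefix s (U k)) ->
  exists i j (zi zj : letter),
    rich_in s (U i) zi /\ rich_in s (U j) zj /\ zi <> zj.
Proof.
move=> sturm fact prefix.
have rich_some k : exists z, rich_in s (U k) z.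
  rewrite prefix; apply: prefix_rich sturm.1 _.
  by rewrite lt0n size_eq0; apply/eqP; apply: fact.1.
have [z0 rich0] := rich_some 0%N.
case: (classic (forall k, rich_in s (U k) z0)) => [all_rich|].
  by case: (prefix_factorization_not_uniform sturm fact prefix all_rich).
move=> /not_all_ex_not[k not_rich_k]; have [zk rich_k] := rich_some k.
exists 0%N, k, z0, zk; do 2!split => //.
by move=> eq_z; apply: not_rich_k; rewrite eq_z.
Qed.
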